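(* Let $m\geq 13$ and $n\geq 13$ be integers with $m\equiv 2\pmod 3$ and $n\not\equiv 2\pmod 3$. Then $\gamma_{sR}(C_m\vee C_n)=3$.
   Context: $C_n$ denotes the cycle on $n$ vertices. For a graph $G=(V,E)$ and $x\in V$, $N_G[x]=\{x\}\cup\{y: xy\in E\}$. A signed Roman dominating function (SRDF) on $G$ is a function $f:V\to\{-1,1,2\}$ such that (a) $\sum_{y\in N_G[x]}f(y)\geq 1$ for every $x\in V$, and (b) every vertex $x$ with $f(x)=-1$ is adjacent to at least one vertex $y$ with $f(y)=2$. The weight of $f$ is $\sum_{x\in V}f(x)$, and $\gamma_{sR}(G)$ is the minimum weight of an SRDF on $G$. The join $G_1\vee G_2$ of two graphs has vertex set $V(G_1)\cup V(G_2)$ (disjoint union) and edge set $E(G_1)\cup E(G_2)\cup\{uv: u\in V(G_1), v\in V(G_2)\}$. *)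

From mathcomp Require Import all_boot all_order all_algebra.
Set Implicit Arguments. Unset Strict Implicit. Unset Printing Implicit Defensive.
Import GRing.Theory Num.Theory.
Local Open Scope ring_scope.

Definition cycle_adj (n : nat) : rel 'I_n :=
  fun i j => (j == (i.+1 %% n)%N :> nat) || (i == (j.+1 %% n)%N :> nat).

Definition join_adj (T1 T2 : finType) (e1 : rel T1) (e2 : rel T2) : rel (T1 + T2) :=
  fun u v => match u, v with
             | inl a, inl b => e1 a b
             | inr a, inr b => e2 a b
             | _, _ => true
             end.

Definition closed_nbhd (T : finType) (e : rel T) (x : T) : {set T} :=
  [set y | (y == x) || e x y].

Definition is_SRDF (T : finType) (e : rel T) (f : {ffun T -> int}) : Prop :=
  (forall x, f x \in [:: -1; 1; 2]) /\
  (forall x, 1 <= \sum_(y in closed_nbhd e x) f y) /\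
  (forall x, f x = -1 -> exists y, e x y /\ f y = 2).

Definition weight (T : finType) (f : {ffun T -> int}) : int := \sum_(x : T) f x.

Definition gamma_sR_eq (T : finType) (e : rel T) (k : int) : Prop :=
  (exists f, is_SRDF e f /\ weight f = k) /\
  (forall f, is_SRDF e f -> k <= weight f).

From mathcomp Require Import all_boot all_order all_algebra zify ring.
Set Implicit Arguments. Unset Strict Implicit. Unset Printing Implicit Defensive.
Import GRing.Theory Num.Theory.
Local Open Scope ring_scope.

(* Write A and B for the weights of an SRDF on the two cycles. Summing the
   neighbourhood condition over the vertices of C_m counts every value three
   times, so m <= 3A + mB, and symmetrically n <= 3B + nA; hence weight at most
   2 forces A = B = 1. On C_n every window of three consecutive values then
   has sum >= 0 while the windows add up to 3; this rules out the value 1 and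
   leaves values in {-1, 2}, whence n + 1 = \sum (f + 1) is divisible by 3,
   i.e. n = 2 (mod 3). Conversely the periodic pattern 2, -1, -1, 2, ... on
   both cycles (with one -1 raised to 1 on C_n when 3 divides n) has weight
   1 + 2 = 3. *)

Lemma sum_uniq_le_sum (R : numDomainType) (T : finType) (F : T -> R) (s : seq T) :
  uniq s -> (forall x, 0 <= F x) -> \sum_(x <- s) F x <= \sum_x F x.
Proof.
move=> uniq_s F_ge0; rewrite (big_uniq _ uniq_s) [leRHS](bigID (mem s)) /=.
by rewrite lerDl sumr_ge0.
Qed.

Lemma srdf_valueP (x : int) : x \in [:: -1; 1; 2] -> [\/ x = -1, x = 1 | x = 2].
Proof. by rewrite !inE => /or3P[]/eqP->; [constructor 1 | constructor 2 | constructor 3]. Qed.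

Section Cycle.

Variable n : nat.
Implicit Types (a : 'I_n) (g : 'I_n -> int).

Lemma ordS_cases a :
  (a.+1 = n /\ ordS a = 0%N :> nat) \/ (a.+1 < n /\ ordS a = a.+1 :> nat)%N.
Proof.
have a_lt := ltn_ord a; rewrite [nat_of_ord (ordS a)]/=.
case: (a.+1 =P n) => [eq_n|ne_n]; [left | right].
  by rewrite eq_n modnn.
by rewrite modn_small; lia.
Qed.

Lemma ord_pred_cases a :
  (a = 0%N :> nat /\ (ord_pred a).+1 = n) \/ (0 < a /\ (ord_pred a).+1 = a)%N.
Proof. by have := ordS_cases (ord_pred a); rewrite ord_predK; lia. Qed.

Definition cycle_window g a := g a + g (ordS a) + g (ord_pred a).

Lemma closed_nbhd_cycle a : closed_nbhd (@cycle_adj n) a = [set a; ordS a; ord_pred a].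
Proof.
apply/setP => b; rewrite !inE /cycle_adj.
have -> : ((a : nat) == (b.+1 %% n)%N) = (b == ord_pred a).
  by rewrite -(inj_eq (@ordS_inj n)) ord_predK eq_sym.
by rewrite orbA.
Qed.

Lemma sum_closed_nbhd_cycle g a :
  (3 <= n)%N -> \sum_(b in closed_nbhd (@cycle_adj n) a) g b = cycle_window g a.
Proof.
move=> n_ge3; have succ_a := ordS_cases a; have pred_a := ord_pred_cases a.
rewrite closed_nbhd_cycle setUC !big_setU1 ?big_set1 /=.
- by rewrite addrC.
- by rewrite inE; apply/eqP => /(congr1 (@nat_of_ord n)); lia.
by rewrite !inE negb_or; apply/andP; split; apply/eqP => /(congr1 (@nat_of_ord n)); lia.
Qed.

Lemma sum_cycle_window g : \sum_a cycle_window g a = 3 * \sum_a g a.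
Proof.
have sumS : \sum_a g (ordS a) = \sum_a g a by rewrite [RHS](reindex_inj (@ordS_inj n)).
have sumP : \sum_a g (ord_pred a) = \sum_a g a.
  by rewrite [RHS](reindex_inj (@ord_pred_inj n)).
by rewrite !big_split /= sumS sumP; ring.
Qed.

Lemma uniq_cycle_run4 a :
  (3 < n)%N -> uniq [:: ord_pred (ord_pred a); ord_pred a; a; ordS a].
Proof.
move=> n_gt3; have := ltn_ord a; have := ordS_cases a.
have := ord_pred_cases a; have := ord_pred_cases (ord_pred a).
by rewrite /= !inE !negb_or -!(inj_eq val_inj) /= => *; apply/and4P; split;
  rewrite ?andbT; try (apply/and3P; split); try (apply/andP; split); apply/eqP; lia.
Qed.

Lemma cycle_window_count g s :
  (forall a, 1 <= cycle_window g a + s) -> n%:Z <= 3 * \sum_a g a + s * n%:Z.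
Proof.
move=> window_ge.
have : \sum_(a < n) 1 <= \sum_a (cycle_window g a + s) by apply: ler_sum => a _.
by rewrite big_split /= sum_cycle_window !sumr_const card_ord -natz mulr_natr.
Qed.

End Cycle.

Section Join.

Variables (T1 T2 : finType) (e1 : rel T1) (e2 : rel T2).

Lemma sum_closed_nbhd_join_inl (F : T1 + T2 -> int) a :
  \sum_(y in closed_nbhd (join_adj e1 e2) (inl a)) F y =
  \sum_(b in closed_nbhd e1 a) F (inl b) + \sum_c F (inr c).
Proof.
rewrite big_mkcond big_sumType /= [in RHS]big_mkcond.
by congr (_ + _); apply: eq_bigr => b _; rewrite /closed_nbhd !inE.
Qed.

Lemma sum_closed_nbhd_join_inr (F : T1 + T2 -> int) c :
  \sum_(y in closed_nbhd (join_adj e1 e2) (inr c)) F y =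
  \sum_b F (inl b) + \sum_(d in closed_nbhd e2 c) F (inr d).
Proof.
rewrite big_mkcond big_sumType /= [X in _ = _ + X]big_mkcond.
by congr (_ + _); apply: eq_bigr => b _; rewrite /closed_nbhd !inE.
Qed.

End Join.

Section TightCycle.

Variables (n : nat) (f : 'I_n -> int).
Hypotheses (n_gt3 : (3 < n)%N) (f_values : forall a, f a \in [:: -1; 1; 2])
  (window_ge0 : forall a, 0 <= cycle_window f a) (sum_f : \sum_a f a = 1).

Lemma tight_window_ge1 a :
  f a = 1 \/ f (ordS a) = 1 \/ f (ord_pred a) = 1 -> 1 <= cycle_window f a.
Proof.
have := window_ge0 a; rewrite /cycle_window.
case: (srdf_valueP (f_values a)) => ->; case: (srdf_valueP (f_values (ordS a))) => ->;
  by case: (srdf_valueP (f_values (ord_pred a))) => ->; lia.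
Qed.

Lemma tight_run4_windows_le3 a :
  cycle_window f (ord_pred (ord_pred a)) + cycle_window f (ord_pred a) +
  cycle_window f a + cycle_window f (ordS a) <= 3.
Proof.
have := sum_uniq_le_sum (uniq_cycle_run4 a n_gt3) window_ge0.
by rewrite sum_cycle_window sum_f !big_cons big_nil; lia.
Qed.

Lemma tight_no_adjacent_ones a : f a = 1 -> f (ord_pred a) != 1.
Proof.
move=> fa; apply/eqP => fpa; have := tight_run4_windows_le3 a.
have w0 : 1 <= cycle_window f (ord_pred (ord_pred a)).
  by apply: tight_window_ge1; rewrite ord_predK; right; left.
have w1 : 1 <= cycle_window f (ord_pred a) by apply: tight_window_ge1; left.
have w2 : 1 <= cycle_window f a by apply: tight_window_ge1; left.
have w3 : 1 <= cycle_window f (ordS a).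
  by apply: tight_window_ge1; rewrite ordSK; right; right.
lia.
Qed.

Lemma tight_no_one a : f a != 1.
Proof.
apply/eqP => fa; have := tight_run4_windows_le3 a.
have fp := tight_no_adjacent_ones fa.
have fs : f (ordS a) != 1.
  by apply/eqP => /tight_no_adjacent_ones; rewrite ordSK fa eqxx.
have w0 := window_ge0 (ord_pred (ord_pred a)).
have w1 : 1 <= cycle_window f (ord_pred a).
  by apply: tight_window_ge1; rewrite ord_predK; right; left.
have w2 : 2 <= cycle_window f a.
  move: (window_ge0 a) fp fs; rewrite /cycle_window fa.
  case: (srdf_valueP (f_values (ordS a))) => ->;
    by case: (srdf_valueP (f_values (ord_pred a))) => ->.
have w3 : 1 <= cycle_window f (ordS a).
  by apply: tight_window_ge1; rewrite ordSK; right; right.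
lia.
Qed.

Lemma tight_cycle_mod3 : (n %% 3 = 2)%N.
Proof.
have f_succ c : f c + 1 = 3 * (f c == 2)%:R.
  by have := tight_no_one c; case: (srdf_valueP (f_values c)) => ->.
have : \sum_c (f c + 1) = 1 + n%:R by rewrite big_split /= sum_f sumr_const card_ord.
by rewrite (eq_bigr _ (fun c _ => f_succ c)) -mulr_sumr natz; lia.
Qed.

End TightCycle.

Definition join_ffun (T1 T2 : finType) (g1 : T1 -> int) (g2 : T2 -> int) :
  {ffun T1 + T2 -> int} := [ffun y => match y with inl a => g1 a | inr c => g2 c end].

Lemma weight_join_ffun (T1 T2 : finType) (g1 : T1 -> int) (g2 : T2 -> int) :
  weight (join_ffun g1 g2) = \sum_a g1 a + \sum_c g2 c.
Proof. by rewrite /weight big_sumType; congr (_ + _); apply: eq_bigr => x _; rewrite ffunE. Qed.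

Section JoinCycles.

Variables m n : nat.
Hypotheses (m_ge3 : (3 <= m)%N) (n_ge3 : (3 <= n)%N).
Let G := join_adj (@cycle_adj m) (@cycle_adj n).

Lemma SRDF_join_cycles (g1 : 'I_m -> int) (g2 : 'I_n -> int) :
  (forall a, g1 a \in [:: -1; 1; 2]) -> (forall c, g2 c \in [:: -1; 1; 2]) ->
  (forall a, 1 <= cycle_window g1 a + \sum_c g2 c) ->
  (forall c, 1 <= cycle_window g2 c + \sum_a g1 a) ->
  (exists a, g1 a = 2) -> (exists c, g2 c = 2) ->
  is_SRDF G (join_ffun g1 g2).
Proof.
move=> g1_values g2_values window1 window2 [a2 g1_a2] [c2 g2_c2].
have sum1 : \sum_a join_ffun g1 g2 (inl a) = \sum_a g1 a.
  by apply: eq_bigr => a _; rewrite ffunE.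
have sum2 : \sum_c join_ffun g1 g2 (inr c) = \sum_c g2 c.
  by apply: eq_bigr => c _; rewrite ffunE.
split; [|split].
- by case=> x; rewrite ffunE.
- case=> x.
    rewrite sum_closed_nbhd_join_inl sum_closed_nbhd_cycle // sum2.
    by rewrite /cycle_window !ffunE; apply: window1.
  rewrite sum_closed_nbhd_join_inr sum_closed_nbhd_cycle // sum1 addrC.
  by rewrite /cycle_window !ffunE; apply: window2.
- by case=> x _; [exists (inr c2) | exists (inl a2)]; rewrite ffunE.
Qed.

Lemma SRDF_join_cycles_window_l F : is_SRDF G F ->
  forall a, 1 <= cycle_window (fun b => F (inl b)) a + \sum_c F (inr c).
Proof.
move=> [_ [nbhd_ge1 _]] a; rewrite -sum_closed_nbhd_cycle //.
by rewrite -(sum_closed_nbhd_join_inl _ (@cycle_adj n)).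
Qed.

Lemma SRDF_join_cycles_window_r F : is_SRDF G F ->
  forall c, 1 <= cycle_window (fun d => F (inr d)) c + \sum_a F (inl a).
Proof.
move=> [_ [nbhd_ge1 _]] c; rewrite -sum_closed_nbhd_cycle // addrC.
by rewrite -(sum_closed_nbhd_join_inr (@cycle_adj m)).
Qed.

End JoinCycles.

Lemma SRDF_join_cycles_weight_ge3 m n F :
  (7 <= m)%N -> (7 <= n)%N -> (n %% 3 != 2)%N ->
  is_SRDF (join_adj (@cycle_adj m) (@cycle_adj n)) F -> 3 <= weight F.
Proof.
move=> m_ge7 n_ge7 n_mod3 srdf; have m_ge3 : (3 <= m)%N by lia.
have n_ge3 : (3 <= n)%N by lia.
have count_m := cycle_window_count (SRDF_join_cycles_window_l m_ge3 srdf).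
have count_n := cycle_window_count (SRDF_join_cycles_window_r n_ge3 srdf).
rewrite /weight big_sumType /=.
set A := \sum_a F (inl a) in count_m count_n *.
set B := \sum_c F (inr c) in count_m count_n *.
have [//|weight_lt3] := lerP 3 (A + B).
have [A1 B1] : A = 1 /\ B = 1 by nia.
case/eqP: n_mod3; apply: (@tight_cycle_mod3 n (fun c => F (inr c))) => //.
- by lia.
- by move=> c; case: srdf.
- by move=> c; have := SRDF_join_cycles_window_r n_ge3 srdf c; rewrite -/A A1; lia.
Qed.

Definition pattern3 (n i : nat) : int :=
  if (i %% 3 == 0)%N then 2 else if (n %% 3 == 0)%N && (i == 1)%N then 1 else -1.

Lemma pattern3_values n i : pattern3 n i \in [:: -1; 1; 2].
Proof. by rewrite /pattern3; do 2?case: ifP. Qed.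

Lemma sum_pattern3_prefix n k : \sum_(i < k) pattern3 n i =
  (if (k %% 3 == 0)%N then 0 else if (k %% 3 == 1)%N then 2 else 1) +
  (if (n %% 3 == 0)%N && (1 < k)%N then 2 else 0).
Proof.
elim: k => [|k IHk]; first by rewrite big_ord0 mod0n andbF.
by rewrite big_ord_recr /= IHk /pattern3; repeat case: ifP => /eqP ?; lia.
Qed.

Lemma sum_pattern3 n : (2 <= n)%N ->
  \sum_(i < n) pattern3 n i = if (n %% 3 == 2)%N then 1 else 2.
Proof.
move=> n_ge2; rewrite sum_pattern3_prefix n_ge2 andbT.
by case: (n %% 3)%N (ltn_pmod n (isT : 0 < 3)%N) => [|[|[|r]]].
Qed.

Lemma cycle_window_pattern3_ge0 n (a : 'I_n) :
  0 <= cycle_window (fun i : 'I_n => pattern3 n i) a.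
Proof.
have := ordS_cases a; have := ord_pred_cases a; have := ltn_ord a.
by rewrite /cycle_window /pattern3; repeat case: ifP => /eqP ?; lia.
Qed.

Lemma SRDF_join_cycles_weight3 m n :
  (3 <= m)%N -> (3 <= n)%N -> (m %% 3 = 2)%N -> (n %% 3 != 2)%N ->
  exists F, is_SRDF (join_adj (@cycle_adj m) (@cycle_adj n)) F /\ weight F = 3.
Proof.
move=> m_ge3 n_ge3 m_mod3 /negbTE n_mod3.
have sum_m : \sum_(a < m) pattern3 m a = 1 by rewrite sum_pattern3 ?m_mod3 //; lia.
have sum_n : \sum_(c < n) pattern3 n c = 2 by rewrite sum_pattern3 ?n_mod3 //; lia.
exists (join_ffun (fun a : 'I_m => pattern3 m a) (fun c : 'I_n => pattern3 n c)).
split; last by rewrite weight_join_ffun sum_m sum_n.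
apply: (SRDF_join_cycles m_ge3 n_ge3) => [a|c|a|c||]; rewrite ?pattern3_values //=.
- by have := cycle_window_pattern3_ge0 a; rewrite sum_n; lia.
- by have := cycle_window_pattern3_ge0 c; rewrite sum_m; lia.
- by exists (Ordinal (ltn_trans (isT : 0 < 2)%N m_ge3)).
- by exists (Ordinal (ltn_trans (isT : 0 < 2)%N n_ge3)).
Qed.

Theorem mainTheorem10 (m n : nat) :
  (13 <= m)%N -> (13 <= n)%N -> (m %% 3 = 2)%N -> (n %% 3 != 2)%N ->
  gamma_sR_eq (join_adj (@cycle_adj m) (@cycle_adj n)) 3.
Proof.
move=> m_ge13 n_ge13 m_mod3 n_mod3; split.
  by apply: SRDF_join_cycles_weight3 => //; lia.
by move=> F; apply: SRDF_join_cycles_weight_ge3 => //; lia.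
Qed.
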